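(* Let $P$ be a program and $\sigma\in C_{\mathrm{Power}}(P)$ a Power computation. Then a load $(t,i)$ reads its value from a store $(t',i')$ via a load-from-memory transition if and only if (1) $\sigma=\sigma_1\cdot(\mathrm{prop},t,t',i',a)\cdot\sigma_2\cdot(\mathrm{load},t,i,a)\cdot\sigma_3$, (2) $\sigma_2$ contains no event of the form $(\mathrm{prop},t,*,*,a)$, and (3) $\sigma_3$ contains no event of the form $(\mathrm{commit},t,j,*,a)$ with $j\in\{1,\dots,i-1\}$.
   Context: Programs. Fix a finite set $D$ of values, which also serve as addresses, with $0\in D$, and a finite set $\mathit{Reg}$ of registers taking values in $D$. Expressions are built from constants in $D$, registers, and functions over $D\cup\{\bot\}$ that return $\bot$ iff some argument is $\bot$. Commands are loads $r\leftarrow \mathrm{mem}[e]$, stores $\mathrm{mem}[e]\leftarrow e'$, assignments $r\leftarrow e$, and $\mathrm{assume}(e)$. A thread is a finite automaton whose transitions (instructions) are labeled by commands; a program is a finite sequence of threads with ids $1,\dots,|P|$. $(t,i)$ denotes the $i$-th fetched instruction of thread $t$; $*$ denotes an arbitrary component. Power semantics. A state consists of, for each thread $t$, a runtime state $(F,C,L)$ ($F$ the sequence of fetched instructions, $C$ the set of committed indices, $L$ mapping each index to $\bot$ or to the store read by the load there: an initial store $\mathrm{init}_a$ of value $0$ to $a$, or a pair $(t',i')$), and a storage state $(co,prop)$ ($co$ assigns rational coherence keys to committed stores, initial stores have key $0$; $prop(t,a)$ is the last store to $a$ propagated to $t$, initially $\mathrm{init}_a$). Register values for instruction $(t,i)$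 come from the latest earlier fetched assignment or load to the register ($0$ if none; a load gives $\bot$ if unsatisfied, $0$ if it read an initial store, else the value of the store read). Address/data dependencies are earlier instructions an address/value depends on via registers; control dependencies are earlier assumes. Transitions: (fetch) append an instruction of $T_t$ continuing from the last fetched one's target state, event $(\mathrm{fetch},t,\text{instr})$; (load from memory) load $i$ with $L[i]=\bot$ and address $a\ne\bot$: $L[i]:=prop(t,a)$, event $(\mathrm{load},t,i,a)$; (early read) same event, if the greatest $i'<i$ that is a store with address in $\{a,\bot\}$ has address $a$, value $\ne\bot$ and is uncommitted: $L[i]:=(t,i')$; (commit) uncommitted $i$ with committed address/data/control dependencies, address and value $\ne\bot$, all earlier instructions with the same or unknown address committed, $L[i]\ne\bot$ for loads, value $\ne0$ for assumes: event $(\mathrm{commit},t,i)$; for a store additionally a fresh key $k$ is set as $co(t,i)$, event $(\mathrm{commit},t,i,k,a)$, immediately followed by propagation to $t$; (propagate) committed store $(t',i')$ to $a$ with $co(prop(t,a))<co(t',i')$: $prop(t,a):=(t',i')$, event $(\mathrm{prop},t,t',i',a)$. Final states: all fetched instructions committed; for loads $i'<i$ of a thread to the same address, $co(L[i'])\le co(L[i])$; for a store $i'$ and later load $i$ of a thread to the same address, $co(t,i')\le co(L[i])$. $C_{\mathrm{Power}}(P)$ is the set of event sequences leading from the initial state (nothing fetched) to a final state. *)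

From mathcomp Require Import all_boot all_order all_algebra.
From Stdlib Require List.

Set Implicit Arguments.
Unset Strict Implicit.
Unset Printing Implicit Defensive.

Import Order.TTheory GRing.Theory Num.Theory.

Section PowerSemantics.

(** Values/addresses [D] (a finite set containing [zero], the value 0),
    registers [Reg]. *)
Variable D : finType.
Variable zero : D.
Variable Reg : finType.

(** Expressions.  [EApp f es] applies a function to the values of [es]; its
    evaluation returns [None] (= bottom) iff some argument is bottom, and
    [Some (f vals)] otherwise.  This is exactly the class of functions over
    D u {bot} returning bot iff some argument is bot. *)
Inductive expr : Type :=
| EConst of D
| EReg of Reg
| EApp of (seq D -> D) & seq expr.

Fixpoint eval (rho : Reg -> option D) (e : expr) : option D :=
  match e with
  | EConst d => Some d
  | EReg r => rho r
  | EApp f es =>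
      let vs := map (eval rho) es in
      if all (fun o => o != None) vs then Some (f (pmap id vs)) else None
  end.

Fixpoint regs (e : expr) : seq Reg :=
  match e with
  | EConst _ => [::]
  | EReg r => [:: r]
  | EApp _ es => flatten (map regs es)
  end.

Inductive cmd : Type :=
| CLoad of Reg & expr
| CStore of expr & expr        (* mem[e] <- e' *)
| CAssign of Reg & expr
| CAssume of expr.

(** An instruction is a transition (source control state, command, target). *)
Definition instr : Type := (nat * cmd * nat)%type.

Record thread : Type := Thread { tinit : nat; ttrans : seq instr }.

(** A program is a finite sequence of threads, with ids 1..|P|. *)
Definition program : Type := seq thread.

Definition thread_of (P : program) (t : nat) : thread :=
  nth (Thread 0 [::]) P t.-1.

Inductive src : Type :=
| SInit of D
| SStore of nat & nat.

Inductive event : Type :=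
| EvFetch of nat & instr
| EvLoad of nat & nat & D                   (* (load, t, i, a) *)
| EvCommit of nat & nat
| EvCommitSt of nat & nat & rat & D         (* (commit, t, i, k, a) *)
| EvProp of nat & nat & nat & D.            (* (prop, t, t', i', a) *)

(** Global state: for each thread t the runtime state (F t, C t, L t) and the
    storage state (co, prop).  Instruction indices are 1-based. *)
Record state : Type := State {
  sF : nat -> seq instr;                 (* fetched instructions *)
  sC : nat -> nat -> bool;               (* committed indices *)
  sL : nat -> nat -> option src;         (* store read by a load, or bot *)
  sco : nat -> nat -> option rat;        (* coherence keys of committed stores *)
  sprop : nat -> D -> src                (* last store to a propagated to t *)
}.

Definition init_state : state :=
  State (fun _ => [::]) (fun _ _ => false) (fun _ _ => None) (fun _ _ => None)
        (fun _ a => SInit a).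

(** command of the i-th fetched instruction of thread t (1-based) *)
Definition icmd (s : state) (t i : nat) : option cmd :=
  if i is n.+1 then omap (fun x : instr => x.1.2) (onth (sF s t) n) else None.

Definition writes (c : cmd) (r : Reg) : bool :=
  match c with
  | CLoad r' _ | CAssign r' _ => r' == r
  | _ => false
  end.

Definition last_writer (s : state) (t i : nat) (r : Reg) (j : nat) : Prop :=
  (0 < j < i)%N /\ (exists c, icmd s t j = Some c /\ writes c r) /\
  forall k c, (j < k < i)%N -> icmd s t k = Some c -> ~~ writes c r.

Definition no_writer (s : state) (t i : nat) (r : Reg) : Prop :=
  forall j c, (0 < j < i)%N -> icmd s t j = Some c -> ~~ writes c r.

(** [regval s t i r v]: the value of register [r] for instruction (t,i) is [v]
    (None = bot). *)
Inductive regval (s : state) : nat -> nat -> Reg -> option D -> Prop :=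
| RV_none t i r : no_writer s t i r -> regval s t i r (Some zero)
| RV_assign t i r j e (rho : Reg -> option D) :
    last_writer s t i r j -> icmd s t j = Some (CAssign r e) ->
    (forall r0, r0 \in regs e -> regval s t j r0 (rho r0)) ->
    regval s t i r (eval rho e)
| RV_unsat t i r j e :
    last_writer s t i r j -> icmd s t j = Some (CLoad r e) ->
    sL s t j = None -> regval s t i r None
| RV_init t i r j e a :
    last_writer s t i r j -> icmd s t j = Some (CLoad r e) ->
    sL s t j = Some (SInit a) -> regval s t i r (Some zero)
| RV_store t i r j e t' i' ea ed (rho : Reg -> option D) :
    last_writer s t i r j -> icmd s t j = Some (CLoad r e) ->
    sL s t j = Some (SStore t' i') -> icmd s t' i' = Some (CStore ea ed) ->
    (forall r0, r0 \in regs ed -> regval s t' i' r0 (rho r0)) ->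
    regval s t i r (eval rho ed).

Definition exprval (s : state) (t i : nat) (e : expr) (v : option D) : Prop :=
  exists rho : Reg -> option D,
    (forall r, r \in regs e -> regval s t i r (rho r)) /\ eval rho e = v.

Definition addr_expr (c : cmd) : option expr :=
  match c with CLoad _ e | CStore e _ => Some e | _ => None end.

Definition val_expr (c : cmd) : option expr :=
  match c with
  | CStore _ e | CAssign _ e | CAssume e => Some e
  | CLoad _ _ => None
  end.

Definition addr (s : state) (t i : nat) (a : option D) : Prop :=
  exists c e, icmd s t i = Some c /\ addr_expr c = Some e /\ exprval s t i e a.

Definition is_load (s : state) (t i : nat) : Prop :=
  exists r e, icmd s t i = Some (CLoad r e).

Definition is_store (s : state) (t i : nat) : Prop :=
  exists ea ed, icmd s t i = Some (CStore ea ed).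

Definition addr_dep (s : state) (t i j : nat) : Prop :=
  exists c e r, icmd s t i = Some c /\ addr_expr c = Some e /\
    r \in regs e /\ last_writer s t i r j.

Definition data_dep (s : state) (t i j : nat) : Prop :=
  exists c e r, icmd s t i = Some c /\ val_expr c = Some e /\
    r \in regs e /\ last_writer s t i r j.

Definition ctrl_dep (s : state) (t i j : nat) : Prop :=
  (0 < j < i)%N /\ exists e, icmd s t j = Some (CAssume e).

Definition coK (s : state) (x : src) : option rat :=
  match x with SInit _ => Some 0%R | SStore t i => sco s t i end.

Definition coL (s : state) (t i : nat) : option rat := obind (coK s) (sL s t i).

Definition upd2 {X : Type} (f : nat -> nat -> X) (t i : nat) (x : X) :=
  fun t0 i0 => if (t0 == t) && (i0 == i) then x else f t0 i0.

Definition updP (f : nat -> D -> src) (t : nat) (a : D) (x : src) :=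
  fun t0 a0 => if (t0 == t) && (a0 == a) then x else f t0 a0.

Definition set_L (s : state) (t i : nat) (x : option src) : state :=
  State (sF s) (sC s) (upd2 (sL s) t i x) (sco s) (sprop s).

Definition set_C (s : state) (t i : nat) : state :=
  State (sF s) (upd2 (sC s) t i true) (sL s) (sco s) (sprop s).

Definition set_prop (s : state) (t : nat) (a : D) (x : src) : state :=
  State (sF s) (sC s) (sL s) (sco s) (updP (sprop s) t a x).

Definition load_from_mem (s : state) (t i : nat) (a : D) (s' : state) : Prop :=
  (exists r e, icmd s t i = Some (CLoad r e) /\ exprval s t i e (Some a)) /\
  sL s t i = None /\
  s' = set_L s t i (Some (sprop s t a)).

Definition early_read (s : state) (t i : nat) (a : D) (s' : state) : Prop :=
  (exists r e, icmd s t i = Some (CLoad r e) /\ exprval s t i e (Some a)) /\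
  sL s t i = None /\
  exists i',
    [/\ (0 < i' < i)%N, addr s t i' (Some a),
        (exists ea ed v, icmd s t i' = Some (CStore ea ed) /\
                         exprval s t i' ed (Some v)),
        ~~ sC s t i' &
        (forall j, (i' < j < i)%N -> is_store s t j ->
           ~ (addr s t j None \/ addr s t j (Some a)))] /\
    s' = set_L s t i (Some (SStore t i')).

Definition commit_pre (s : state) (t i : nat) : Prop :=
  [/\ (0 < i <= size (sF s t))%N, ~~ sC s t i,
      forall j, addr_dep s t i j -> sC s t j,
      forall j, data_dep s t i j -> sC s t j &
      forall j, ctrl_dep s t i j -> sC s t j].

Definition mem_order_ok (s : state) (t i : nat) (a : D) : Prop :=
  forall j, (0 < j < i)%N -> (addr s t j None \/ addr s t j (Some a)) -> sC s t j.

Definition last_ctrl (T : thread) (F : seq instr) : nat :=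
  last (tinit T) (map (fun x : instr => x.2) F).

Inductive step (P : program) (s : state) : seq event -> state -> Prop :=
| St_fetch t (x : instr) :
    (0 < t <= size P)%N ->
    List.In x (ttrans (thread_of P t)) ->
    x.1.1 = last_ctrl (thread_of P t) (sF s t) ->
    step P s [:: EvFetch t x]
      (State (fun t0 => if t0 == t then rcons (sF s t) x else sF s t0)
             (sC s) (sL s) (sco s) (sprop s))
| St_load_mem t i a s' :
    load_from_mem s t i a s' -> step P s [:: EvLoad t i a] s'
| St_early t i a s' :
    early_read s t i a s' -> step P s [:: EvLoad t i a] s'
| St_commit_load t i r e a :
    commit_pre s t i -> icmd s t i = Some (CLoad r e) ->
    exprval s t i e (Some a) -> mem_order_ok s t i a -> sL s t i <> None ->
    step P s [:: EvCommit t i] (set_C s t i)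
| St_commit_assign t i r e v :
    commit_pre s t i -> icmd s t i = Some (CAssign r e) ->
    exprval s t i e (Some v) ->
    step P s [:: EvCommit t i] (set_C s t i)
| St_commit_assume t i e v :
    commit_pre s t i -> icmd s t i = Some (CAssume e) ->
    exprval s t i e (Some v) -> v != zero ->
    step P s [:: EvCommit t i] (set_C s t i)
| St_commit_store t i ea ed a v (k kp : rat) :
    commit_pre s t i -> icmd s t i = Some (CStore ea ed) ->
    exprval s t i ea (Some a) -> exprval s t i ed (Some v) ->
    mem_order_ok s t i a ->
    k != 0%R -> (forall t0 i0 k0, sco s t0 i0 = Some k0 -> k0 != k) ->
    (* the commit is immediately followed by the propagation to t *)
    coK s (sprop s t a) = Some kp -> (kp < k)%R ->
    step P s [:: EvCommitSt t i k a; EvProp t t i a]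
      (State (sF s) (upd2 (sC s) t i true) (sL s) (upd2 (sco s) t i (Some k))
             (updP (sprop s) t a (SStore t i)))
| St_prop t t' i' a kp k :
    (0 < t <= size P)%N -> sC s t' i' -> is_store s t' i' ->
    addr s t' i' (Some a) ->
    coK s (sprop s t a) = Some kp -> sco s t' i' = Some k -> (kp < k)%R ->
    step P s [:: EvProp t t' i' a] (set_prop s t a (SStore t' i')).

Fixpoint run (P : program) (s : state) (tr : seq (seq event * state)) : Prop :=
  match tr with
  | [::] => True
  | (evs, s') :: tr' => step P s evs s' /\ run P s' tr'
  end.

Definition run_events (tr : seq (seq event * state)) : seq event :=
  flatten (map fst tr).

Definition run_last (s : state) (tr : seq (seq event * state)) : state :=
  last s (map snd tr).

Definition final (s : state) : Prop :=
  [/\ forall t i, (0 < i <= size (sF s t))%N -> sC s t i,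
      forall t i' i a, (0 < i' < i)%N -> is_load s t i' -> is_load s t i ->
        addr s t i' (Some a) -> addr s t i (Some a) ->
        exists k1 k2, [/\ coL s t i' = Some k1, coL s t i = Some k2 & (k1 <= k2)%R] &
      forall t i' i a, (0 < i' < i)%N -> is_store s t i' -> is_load s t i ->
        addr s t i' (Some a) -> addr s t i (Some a) ->
        exists k1 k2, [/\ sco s t i' = Some k1, coL s t i = Some k2 & (k1 <= k2)%R]].

Definition power_run (P : program) (tr : seq (seq event * state)) : Prop :=
  run P init_state tr /\ final (run_last init_state tr).

Definition C_Power (P : program) (sigma : seq event) : Prop :=
  exists tr, power_run P tr /\ run_events tr = sigma.

Definition reads_from_mem (P : program) (tr : seq (seq event * state))
    (t i t' i' : nat) : Prop :=
  exists k a,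
    let s := run_last init_state (take k tr) in
    exists s', nth ([::], init_state) tr k = ([:: EvLoad t i a], s') /\
      (k < size tr)%N /\
      load_from_mem s t i a s' /\ sprop s t a = SStore t' i'.

End PowerSemantics.

Arguments EvFetch {D Reg}.
Arguments EvLoad {D Reg}.
Arguments EvCommit {D Reg}.
Arguments EvCommitSt {D Reg}.
Arguments EvProp {D Reg}.

(* Along a run every state only grows: fetched instructions, satisfied loads,
   commits and coherence keys are never undone, and the coherence key of the
   store last propagated to (t,a) never decreases, while a store of t to a is
   committed with a key above that one.  The storage entry prop(t,a) is the
   source of the last (prop,t,*,*,a) event, and a load event occurs only once.

   If (t,i) reads (t',i') from memory at step k, the last propagation to (t,a)
   before the load is that of (t',i'), and a later commit of a store (t,j) to a
   with j < i would get a key above co(t',i') = co(L[i]), contradicting the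
   final-state requirement co(t,j) <= co(L[i]).  Conversely, the decomposition
   forces prop(t,a) = (t',i') when the load happens; were it an early read, its
   source would be an earlier uncommitted store of t to a, whose commit (it is
   committed in the final state) would emit a forbidden event after the load. *)

From mathcomp Require Import all_boot all_order all_algebra zify.
From Stdlib Require List.

Set Implicit Arguments.
Unset Strict Implicit.
Unset Printing Implicit Defensive.

Import Order.TTheory.

Section Values.

Variables (D : finType) (zero : D) (Reg : finType).

Notation expr := (expr D Reg).
Notation state := (state D Reg).

Fixpoint expr_ind_In (Pe : expr -> Prop) (HC : forall d, Pe (EConst Reg d))
    (HR : forall r, Pe (EReg D r))
    (HA : forall f es, (forall e, List.In e es -> Pe e) -> Pe (EApp f es))
    (e : expr) : Pe e :=
  match e with
  | EConst d => HC d
  | EReg r => HR r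
  | EApp f es => HA f es
      ((fix go (es : seq expr) : forall e, List.In e es -> Pe e :=
         match es with
         | nil => fun e H => False_ind _ H
         | e0 :: es' => fun e H =>
             match H with
             | or_introl E => eq_ind e0 Pe (expr_ind_In HC HR HA e0) e E
             | or_intror H' => go es' e H'
             end
         end) es)
  end.

Lemma eq_eval (e : expr) (rho1 rho2 : Reg -> option D) :
  (forall r, r \in regs e -> rho1 r = rho2 r) -> eval rho1 e = eval rho2 e.
Proof.
elim/expr_ind_In: e => [d|r|f es IH] Hrho //=; first by apply: Hrho; rewrite inE.
suff -> : map (eval rho1) es = map (eval rho2) es by [].
elim: es IH Hrho => [|e es IHes] IH Hrho //=.
rewrite (IH e (or_introl erefl)) ?IHes // => [e' He'|r Hr|r Hr].
- exact: IH (or_intror He').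
- by apply: Hrho; rewrite /= mem_cat Hr orbT.
- by apply: Hrho; rewrite /= mem_cat Hr.
Qed.

Lemma eval_regs_Some (e : expr) (rho : Reg -> option D) r :
  eval rho e <> None -> r \in regs e -> rho r <> None.
Proof.
elim/expr_ind_In: e => [d|r0|f es IH] //=; first by move=> ? /[!inE] /eqP ->.
case: ifP => // Hall _; elim: es IH Hall => [|e es IHes] IH //= /andP [He Hall].
rewrite mem_cat => /orP [Hr|Hr].
  by apply: (IH e (or_introl erefl)) Hr => E; rewrite E in He.
exact: IHes (fun e' H => IH e' (or_intror H)) Hall Hr.
Qed.

Lemma last_writer_uniq (s : state) t i r j1 j2 :
  last_writer s t i r j1 -> last_writer s t i r j2 -> j1 = j2.
Proof.
move=> [/andP [_ lt_j1] [[c1 [E1 W1]] K1]] [/andP [_ lt_j2] [[c2 [E2 W2]] K2]].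
case: (ltngtP j1 j2) => // [lt12|lt21].
- by move: (K1 j2 c2); rewrite lt12 lt_j2 E2 W2 => /(_ isT erefl).
- by move: (K2 j1 c1); rewrite lt21 lt_j1 E1 W1 => /(_ isT erefl).
Qed.

Lemma last_writer_no_writer (s : state) t i r j :
  last_writer s t i r j -> ~ no_writer s t i r.
Proof. by move=> [Hj [[c [Ec Wc]] _]] /(_ j c Hj Ec); rewrite Wc. Qed.

Lemma regval_uniq (s : state) t i r v1 v2 :
  regval zero s t i r v1 -> regval zero s t i r v2 -> v1 = v2.
Proof.
move=> H; elim: H v2 => {t i r v1}
  [t i r Hnw|t i r j e rho Hlw He _ IH|t i r j e Hlw He HL
  |t i r j e a Hlw He HL|t i r j e t' i' ea ed rho Hlw He HL Hst _ IH] v2 H2;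
  inversion H2; subst => //;
  try (by case: (last_writer_no_writer H));
  try (by case: (last_writer_no_writer Hlw));
  have E := last_writer_uniq Hlw H; subst; rewrite He in H0; try congruence.
- case: H0 => E; subst e0; apply: eq_eval => r0 Hr0; exact: IH (H1 r0 Hr0).
- rewrite HL in H1; case: H1 => E1 E2; subst t'0 i'0.
  rewrite Hst in H3; case: H3 => _ E; subst ed0.
  by apply: eq_eval => r0 Hr0; exact: IH (H4 r0 Hr0).
Qed.

Lemma exprval_uniq (s : state) t i e v1 v2 :
  exprval zero s t i e v1 -> exprval zero s t i e v2 -> v1 = v2.
Proof.
move=> [rho1 [H1 <-]] [rho2 [H2 <-]]; apply: eq_eval => r Hr.
exact: regval_uniq (H1 r Hr) (H2 r Hr).
Qed.

End Values.

Section Monotonicity.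

Variables (D : finType) (zero : D) (Reg : finType).

Notation state := (state D Reg).

Definition state_le (s s' : state) : Prop :=
  [/\ forall t, exists F, sF s' t = sF s t ++ F,
      forall t i x, sL s t i = Some x -> sL s' t i = Some x,
      forall t i, sC s t i -> sC s' t i,
      forall t i k, sco s t i = Some k -> sco s' t i = Some k &
      forall t a k, coK s (sprop s t a) = Some k ->
        exists2 k', coK s' (sprop s' t a) = Some k' & (k <= k')%R].

Lemma state_le_refl (s : state) : state_le s s.
Proof. by split=> // [t|t a k Hk]; [exists [::]; rewrite cats0 | exists k]. Qed.

Lemma state_le_trans (s1 s2 s3 : state) :
  state_le s1 s2 -> state_le s2 s3 -> state_le s1 s3.
Proof.
case=> F1 L1 C1 K1 P1 [F2 L2 C2 K2 P2]; split; auto.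
- move=> t; have [x1 E1] := F1 t; have [x2 E2] := F2 t.
  by exists (x1 ++ x2); rewrite E2 E1 catA.
- move=> t a k /P1 [k1 /P2 [k2 Hk2 le12] le01].
  by exists k2 => //; apply: le_trans le12.
Qed.

Lemma icmd_bounds (s : state) t i c :
  icmd s t i = Some c -> (0 < i <= size (sF s t))%N.
Proof.
case: i => //= n; case E: (onth _ n) => [x|] //= _.
by move: (onthNE (sF s t) n); rewrite E /= => /esym/negbT; rewrite -ltnNge.
Qed.

Lemma icmd_le (s s' : state) t i :
  state_le s s' -> (i <= size (sF s t))%N -> icmd s' t i = icmd s t i.
Proof.
case=> F _ _ _ _; have [x E] := F t.
by case: i => //= n le_n; rewrite E onth_cat le_n.
Qed.

Lemma icmd_le_Some (s s' : state) t i c :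
  state_le s s' -> icmd s t i = Some c -> icmd s' t i = Some c.
Proof.
by move=> Hle Hc; rewrite (icmd_le Hle) //; case/andP: (icmd_bounds Hc).
Qed.

Lemma last_writer_le (s s' : state) t i r j :
  state_le s s' -> (i <= size (sF s t))%N ->
  last_writer s t i r j -> last_writer s' t i r j.
Proof.
move=> Hle Hi [Hj [[c [Hc Wc]] K]]; split=> //; split.
  by exists c; rewrite (icmd_le_Some Hle Hc).
move=> k c' /[dup] Hk /andP [_ lt_ki].
by rewrite (icmd_le Hle) ?(ltnW (leq_trans lt_ki Hi)) //; apply: K.
Qed.

Lemma no_writer_le (s s' : state) t i r :
  state_le s s' -> (i <= size (sF s t))%N ->
  no_writer s t i r -> no_writer s' t i r.
Proof.
move=> Hle Hi Hnw j c /[dup] Hj /andP [_ lt_ji].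
by rewrite (icmd_le Hle) ?(ltnW (leq_trans lt_ji Hi)) //; apply: Hnw.
Qed.

Lemma regval_le (s s' : state) t i r v :
  state_le s s' -> (i <= size (sF s t))%N -> v <> None ->
  regval zero s t i r v -> regval zero s' t i r v.
Proof.
move=> Hle + + H; have [_ Lmono _ _ _] := Hle; elim: H => {t i r v}
  [t i r Hnw|t i r j e rho Hlw He _ IH|//|t i r j e a Hlw He HL
  |t i r j e t' i' ea ed rho Hlw He HL Hst _ IH] Hi Hv.
- exact: RV_none (no_writer_le Hle Hi Hnw).
- have Hj : (j <= size (sF s t))%N.
    by case: Hlw => /andP [_ /ltnW lt_ji] _; apply: leq_trans Hi.
  apply: RV_assign (last_writer_le Hle Hi Hlw) (icmd_le_Some Hle He) _ => r0 Hr0.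
  exact: IH r0 Hr0 Hj (eval_regs_Some Hv Hr0).
- exact: RV_init (last_writer_le Hle Hi Hlw) (icmd_le_Some Hle He) (Lmono _ _ _ HL).
- apply: RV_store (last_writer_le Hle Hi Hlw) (icmd_le_Some Hle He)
    (Lmono _ _ _ HL) (icmd_le_Some Hle Hst) _.
  move=> r0 Hr0; apply: IH r0 Hr0 _ (eval_regs_Some Hv Hr0).
  by case/andP: (icmd_bounds Hst).
Qed.

Lemma exprval_le (s s' : state) t i e v :
  state_le s s' -> (i <= size (sF s t))%N ->
  exprval zero s t i e (Some v) -> exprval zero s' t i e (Some v).
Proof.
move=> Hle Hi [rho [Hr Hv]]; exists rho; split=> // r Hin.
by apply: regval_le (Hr r Hin) => //; apply: eval_regs_Some Hin; rewrite Hv.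
Qed.

Lemma exprval_le_icmd (s s' : state) t i c e v :
  state_le s s' -> icmd s t i = Some c ->
  exprval zero s t i e (Some v) -> exprval zero s' t i e (Some v).
Proof. by move=> Hle /icmd_bounds /andP [_]; apply: exprval_le. Qed.

End Monotonicity.

Section Steps.

Variables (D : finType) (zero : D) (Reg : finType) (P : program D Reg).

Notation state := (state D Reg).
Notation step := (step zero P).

Definition keyed_state (s : state) : Prop :=
  (forall t a, exists k, coK s (sprop s t a) = Some k) /\
  (forall t i k, sco s t i = Some k -> sC s t i).

Lemma keyed_init : keyed_state (init_state D Reg).
Proof. by split=> // t a; exists 0%R. Qed.

Lemma coK_le (s s' : state) x k :
  (forall t i k, sco s t i = Some k -> sco s' t i = Some k) ->
  coK s x = Some k -> coK s' x = Some k.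
Proof. by move=> Hco; case: x => //= t i; apply: Hco. Qed.

Lemma state_le_same_storage (s s' : state) :
  sF s' = sF s -> (forall t i x, sL s t i = Some x -> sL s' t i = Some x) ->
  (forall t i, sC s t i -> sC s' t i) -> sco s' = sco s -> sprop s' = sprop s ->
  state_le s s'.
Proof.
move=> HF HL HC Hco Hprop; split=> // [t|t i k|t a k]; rewrite ?Hco //.
  by exists [::]; rewrite HF cats0.
by rewrite Hprop => Hk; exists k => //; case: (sprop s t a) Hk => //= ? ?; rewrite Hco.
Qed.

Lemma set_L_le (s : state) t i x : sL s t i = None -> state_le s (set_L s t i x).
Proof.
move=> HN; apply: state_le_same_storage => //= t0 i0 x0; rewrite /upd2.
by case: ifP => // /andP [/eqP -> /eqP ->]; rewrite HN.
Qed.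

Lemma set_C_le (s : state) t i : state_le s (set_C s t i).
Proof. by apply: state_le_same_storage => //= t0 i0; rewrite /upd2; case: ifP. Qed.

Lemma uncommitted_unkeyed (s : state) t i :
  keyed_state s -> ~~ sC s t i -> sco s t i = None.
Proof.
case=> _ HC HnC; case E: (sco s t i) => [k|] //.
by move: (HC _ _ _ E); rewrite (negbTE HnC).
Qed.

Lemma step_le (s s' : state) evs :
  keyed_state s -> step s evs s' -> state_le s s'.
Proof.
move=> Hs; case=> {s' evs}.
- move=> t x _ _ _; split=> //= [t0|t0 a k Hk]; last by exists k.
  by case: eqP => [->|_]; [exists [:: x]; rewrite cats1 | exists [::]; rewrite cats0].
- by move=> t i a s' [_ [HN ->]]; apply: set_L_le.
- by move=> t i a s' [_ [HN [i0 [_ ->]]]]; apply: set_L_le.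
- by move=> *; apply: set_C_le.
- by move=> *; apply: set_C_le.
- by move=> *; apply: set_C_le.
- move=> t i ea ed a v k kp [_ HnC _ _ _] _ _ _ _ _ _ Hkp lt_kp.
  have HcoN := uncommitted_unkeyed Hs HnC.
  have Hco : forall t0 i0 k0, sco s t0 i0 = Some k0 ->
      upd2 (sco s) t i (Some k) t0 i0 = Some k0.
    move=> t0 i0 k0; rewrite /upd2; case: ifP => // /andP [/eqP -> /eqP ->].
    by rewrite HcoN.
  split=> //= [t0|t0 i0|t0 a0 k0 Hk0].
  + by exists [::]; rewrite cats0.
  + by rewrite /upd2; case: ifP.
  rewrite /updP; case: ifP => [/andP [/eqP E1 /eqP E2]|_]; last first.
    by exists k0 => //; apply: coK_le Hk0.
  subst t0 a0; exists k; first by rewrite /= /upd2 !eqxx.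
  by move: Hk0; rewrite Hkp => -[<-]; apply: ltW.
- move=> t t' i' a kp k _ _ _ _ Hkp Hk lt_kp.
  split=> //= [t0|t0 a0 k0 Hk0]; first by exists [::]; rewrite cats0.
  rewrite /updP; case: ifP => [/andP [/eqP E1 /eqP E2]|_]; last by exists k0.
  subst t0 a0; exists k => //.
  by move: Hk0; rewrite Hkp => -[<-]; apply: ltW.
Qed.

Lemma step_keyed (s s' : state) evs :
  keyed_state s -> step s evs s' -> keyed_state s'.
Proof.
move=> [Hkey Hcom]; case=> {s' evs}.
- by move=> t x; intros; split.
- by move=> t i a s' [_ [_ ->]].
- by move=> t i a s' [_ [_ [j [_ ->]]]].
1-3: by move=> t i; intros; split=> //= t1 i1 k1 /Hcom; rewrite /upd2; case: ifP.
- move=> t i ea ed a v k kp [_ HnC _ _ _] *.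
  have HcoN := uncommitted_unkeyed (conj Hkey Hcom) HnC.
  split=> /= [t0 a0|t0 i0 k0]; last by rewrite /upd2; case: ifP => // _ /Hcom.
  rewrite /updP; case: ifP => _; first by exists k; rewrite /= /upd2 !eqxx.
  have [k0 Hk0] := Hkey t0 a0; exists k0; apply: coK_le Hk0 => t1 i1 k1.
  by rewrite /= /upd2; case: ifP => // /andP [/eqP -> /eqP ->]; rewrite HcoN.
- move=> t t' i' a kp k *; split=> //= t0 a0.
  by rewrite /updP; case: ifP => _; [exists k | apply: Hkey].
Qed.

End Steps.

Lemma cat_cons_uniq (T : Type) (x1 x2 y1 y2 : seq T) (e : T) :
  x1 ++ e :: y1 = x2 ++ e :: y2 -> ~ List.In e x2 -> ~ List.In e y2 ->
  x1 = x2 /\ y1 = y2.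
Proof.
elim: x1 x2 => [|h x1 IH] [|h2 x2] /=.
- by case=> ->.
- by case=> Eh _ Hx2; case: Hx2; left.
- by case=> Eh Ey _ []; rewrite -Ey; apply/List.in_or_app; right; left.
- case=> -> Exy Hx2 Hy2; have [-> ->] // := IH x2 Exy (fun H => Hx2 (or_intror H)) Hy2.
Qed.

Section EventLists.

Variables (D Reg : finType).

Notation event := (event D Reg).
Notation state := (state D Reg).

Lemma run_events_cut (p : seq (seq event * state)) d m : (m < size p)%N ->
  run_events p = run_events (take m p) ++ (nth d p m).1 ++ run_events (drop m.+1 p).
Proof.
move=> lt_mp; rewrite -{1}(cat_take_drop m p) (drop_nth d lt_mp).
by rewrite /run_events map_cat flatten_cat.
Qed.

Lemma In_run_events (p : seq (seq event * state)) d e :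
  List.In e (run_events p) -> exists2 m, (m < size p)%N & List.In e (nth d p m).1.
Proof.
elim: p => [|[evs s] p IH] //= /(List.in_app_or evs) [He|/IH [m lt_mp He]].
  by exists 0%N.
by exists m.+1.
Qed.

Lemma In_run_events_nth (p : seq (seq event * state)) d e m : (m < size p)%N ->
  List.In e (nth d p m).1 -> List.In e (run_events p).
Proof.
move=> lt_mp He; rewrite (run_events_cut d lt_mp).
by apply/List.in_or_app; right; apply/List.in_or_app; left.
Qed.


End EventLists.

Section Propagation.

Variables (D : finType) (zero : D) (Reg : finType) (P : program D Reg).

Notation event := (event D Reg).
Notation state := (state D Reg).
Notation step := (step zero P).

Definition prop_update (t : nat) (a : D) (x : src D) (e : event) : src D :=
  if e is EvProp t0 u v a0 then
    if (t0 == t) && (a0 == a) then SStore D u v else x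
  else x.

Definition no_prop_to (t : nat) (a : D) (l : seq event) : Prop :=
  forall e, List.In e l -> forall u v, e <> EvProp t u v a.

Lemma step_sprop (s s' : state) evs t a : step s evs s' ->
  sprop s' t a = foldl (prop_update t a) (sprop s t a) evs.
Proof.
case=> //=.
- by move=> t0 i0 a0 s0 [_ [HN ->]].
- by move=> t0 i0 a0 s0 [_ [HN [j [_ ->]]]].
- by move=> *; rewrite /updP (eq_sym t) (eq_sym a); case: ifP.
- by move=> *; rewrite /updP (eq_sym t) (eq_sym a); case: ifP.
Qed.

Lemma run_sprop (s : state) p t a : run zero P s p ->
  sprop (run_last s p) t a = foldl (prop_update t a) (sprop s t a) (run_events p).
Proof.
elim: p s => [|[evs s1] p IH] s //= [Hstep Hrun].
by rewrite /run_events /= foldl_cat -(step_sprop t a Hstep) -IH.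
Qed.

Lemma foldl_prop_update_no_prop t a x l :
  no_prop_to t a l -> foldl (prop_update t a) x l = x.
Proof.
elim: l x => [|e l IH] x //= Hl.
rewrite IH => [|e' He']; last exact: Hl (or_intror He').
case: e Hl => //= t0 u v a0 Hl; case: ifP => // /andP [/eqP E1 /eqP E2]; subst.
by case: (Hl _ (or_introl erefl) u v).
Qed.

Lemma prop_to_or_not t a (e : event) :
  (exists u v, e = EvProp t u v a) \/ no_prop_to t a [:: e].
Proof.
case: e => [||||t0 u v a0]; try by right=> ? [<-|[]].
have [<-|ne_t] := eqVneq t0 t; last first.
  by right=> ? [<-|[]] // ? ? [] *; subst; rewrite eqxx in ne_t.
have [<-|ne_a] := eqVneq a0 a; first by left; exists u, v.
by right=> ? [<-|[]] // ? ? [] *; subst; rewrite eqxx in ne_a.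
Qed.

Lemma foldl_prop_update_SStore t a b l t' i' :
  foldl (prop_update t a) (SInit b) l = SStore D t' i' ->
  exists l1 l2, l = l1 ++ EvProp t t' i' a :: l2 /\ no_prop_to t a l2.
Proof.
elim/last_ind: l => [|l e IH] //; rewrite foldl_rcons.
case: (prop_to_or_not t a e) => [[u [v ->]]|He].
  by rewrite /= !eqxx => -[-> ->]; exists l, [::]; rewrite cats1; split=> // ? [].
rewrite -[prop_update _ _ _ e]/(foldl _ _ [:: e]) foldl_prop_update_no_prop //.
move=> /IH [l1 [l2 [-> Hl2]]]; exists l1, (rcons l2 e); rewrite rcons_cat.
by split=> // e'; rewrite -cats1 => /(List.in_app_or l2) [/Hl2|/He].
Qed.

Lemma foldl_prop_update_last t a x l1 t' i' l2 : no_prop_to t a l2 ->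
  foldl (prop_update t a) x (l1 ++ EvProp t t' i' a :: l2) = SStore D t' i'.
Proof. by move=> Hl2; rewrite foldl_cat /= !eqxx foldl_prop_update_no_prop. Qed.

End Propagation.

Section StepInversion.

Variables (D : finType) (zero : D) (Reg : finType) (P : program D Reg).

Notation state := (state D Reg).
Notation step := (step zero P).

Definition load_step (s : state) t i a (s' : state) : Prop :=
  load_from_mem zero s t i a s' \/ early_read zero s t i a s'.

Lemma step_load_inv (s s' : state) evs t i a :
  step s evs s' -> List.In (EvLoad t i a) evs ->
  evs = [:: EvLoad t i a] /\ load_step s t i a s'.
Proof.
case=> [t0 x _ _ _|t0 i0 a0 s0 H|t0 i0 a0 s0 H|t0 i0 r e a0 _ _ _ _ _
  |t0 i0 r e v _ _ _|t0 i0 e v _ _ _ _|t0 i0 ea ed a0 v k kp _ _ _ _ _ _ _ _ _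
  |t0 t1 i1 a0 kp k _ _ _ _ _ _ _] /=; try by case=> [|[]].
- by case=> [[<- <- <-]|[]]; split=> //; left.
- by case=> [[<- <- <-]|[]]; split=> //; right.
Qed.

Lemma load_step_sL (s s' : state) t i a :
  load_step s t i a s' -> sL s t i = None /\ sL s' t i <> None.
Proof.
by case=> [[_ [HN ->]]|[_ [HN [j [_ ->]]]]]; split=> //=; rewrite /upd2 !eqxx.
Qed.

Lemma step_commit_store_inv (s s' : state) evs t j k a :
  step s evs s' -> List.In (EvCommitSt t j k a) evs ->
  exists ea ed kp, [/\ icmd s t j = Some (CStore ea ed), exprval zero s t j ea (Some a),
    coK s (sprop s t a) = Some kp, (kp < k)%R & sco s' t j = Some k].
Proof.
case=> [t0 x _ _ _|t0 i0 a0 s0 H|t0 i0 a0 s0 H|t0 i0 r e a0 _ _ _ _ _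
  |t0 i0 r e v _ _ _|t0 i0 e v _ _ _ _|t0 i0 ea ed a0 v k0 kp _ Hc Ha _ _ _ _ Hkp lt_kp
  |t0 t1 i1 a0 kp k0 _ _ _ _ _ _ _] /=; try by case=> [|[]].
case=> [[<- <- <- <-]|[|[]]] //.
by exists ea, ed, kp; split=> //; rewrite /upd2 !eqxx.
Qed.

Lemma step_commits_store (s s' : state) evs t j ea ed :
  step s evs s' -> ~~ sC s t j -> sC s' t j -> icmd s t j = Some (CStore ea ed) ->
  exists a k, exprval zero s t j ea (Some a) /\ List.In (EvCommitSt t j k a) evs.
Proof.
case=> [t0 x _ _ _|t0 i0 a0 s0 [_ [_ ->]]|t0 i0 a0 s0 [_ [_ [_ [_ ->]]]]
  |t0 i0 r e a0 _ Hc _ _ _|t0 i0 r e v _ Hc _|t0 i0 e v _ Hc _ _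
  |t0 i0 ea' ed' a v k kp _ Hc Ha _ _ _ _ _ _|t0 t1 i1 a0 kp k _ _ _ _ _ _ _]
  /= /negbTE HnC; rewrite /upd2 ?HnC //; case: ifP => // /andP [/eqP E1 /eqP E2];
  subst t0 i0; rewrite Hc // => _ [<- _].
by exists a, k; split=> //; left.
Qed.

End StepInversion.

Section Runs.

Variables (D : finType) (zero : D) (Reg : finType) (P : program D Reg).

Notation event := (event D Reg).
Notation state := (state D Reg).
Notation step := (step zero P).
Notation init := (init_state D Reg).
Notation dflt := (([::], init) : seq event * state).

Lemma run_take (s : state) p m : run zero P s p -> run zero P s (take m p).
Proof.
elim: p s m => [|[evs s1] p IH] s [|m] //= [Hstep Hrun].
by split=> //; apply: IH.
Qed.

Lemma run_nth_step (s : state) p m : run zero P s p -> (m < size p)%N ->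
  step (run_last s (take m p)) (nth dflt p m).1 (nth dflt p m).2.
Proof.
elim: p s m => [|[evs s1] p IH] s [|m] // [Hstep Hrun] // lt_mp.
exact: IH s1 m Hrun lt_mp.
Qed.

Variable tr : seq (seq event * state).
Hypothesis run_tr : run zero P init tr.

Definition run_state (m : nat) : state := run_last init (take m tr).

Lemma run_state_succ m : (m < size tr)%N -> run_state m.+1 = (nth dflt tr m).2.
Proof.
by move=> lt_m; rewrite /run_state (take_nth dflt lt_m) /run_last map_rcons last_rcons.
Qed.

Lemma run_state_step m : (m < size tr)%N ->
  step (run_state m) (nth dflt tr m).1 (run_state m.+1).
Proof. by move=> lt_m; rewrite run_state_succ //; apply: run_nth_step. Qed.

Lemma run_state_keyed_le n :
  keyed_state (run_state n) /\ forall m, (m <= n)%N -> state_le (run_state m) (run_state n).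
Proof.
elim: n => [|n [keyed_n le_n]].
  split=> [|m]; first by rewrite /run_state take0; apply: keyed_init.
  by rewrite leqn0 => /eqP ->; apply: state_le_refl.
have [lt_n|le_size] := ltnP n (size tr).
  have step_n := run_state_step lt_n; split; first exact: step_keyed step_n.
  move=> m; rewrite leq_eqVlt => /orP [/eqP ->|lt_mn]; first exact: state_le_refl.
  exact: state_le_trans (le_n m lt_mn) (step_le keyed_n step_n).
have stuck : run_state n.+1 = run_state n.
  by rewrite /run_state !take_oversize // (leq_trans le_size).
split=> [|m]; first by rewrite stuck.
rewrite leq_eqVlt => /orP [/eqP ->|lt_mn]; first exact: state_le_refl.
by rewrite stuck; apply: le_n.
Qed.

Lemma run_state_le m n : (m <= n)%N -> state_le (run_state m) (run_state n).
Proof. by case: (run_state_keyed_le n) => _; apply. Qed.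

Lemma run_state_keyed n : keyed_state (run_state n).
Proof. by case: (run_state_keyed_le n). Qed.

Lemma run_state_sprop m t a :
  sprop (run_state m) t a = foldl (prop_update t a) (SInit a) (run_events (take m tr)).
Proof. exact: run_sprop (run_take m run_tr). Qed.

Lemma load_step_uniq m n t i a b : (m < size tr)%N -> (n < size tr)%N ->
  List.In (EvLoad t i a) (nth dflt tr m).1 -> List.In (EvLoad t i b) (nth dflt tr n).1 ->
  m = n.
Proof.
have later_load_absurd m' n' a' b' : (m' < n' < size tr)%N ->
    List.In (EvLoad t i a') (nth dflt tr m').1 ->
    List.In (EvLoad t i b') (nth dflt tr n').1 -> False.
  move=> /andP [lt_mn lt_n] Hm Hn.
  have [_ /load_step_sL [_ filled]] :=
    step_load_inv (run_state_step (ltn_trans lt_mn lt_n)) Hm.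
  have [_ /load_step_sL [empty _]] := step_load_inv (run_state_step lt_n) Hn.
  case: (run_state_le lt_mn) => _ Lmono _ _ _.
  by case E: (sL _ t i) filled => [x|] // _; rewrite (Lmono _ _ _ E) in empty.
move=> lt_m lt_n Hm Hn; case: (ltngtP m n) => // [lt_mn|lt_nm].
- by case: (later_load_absurd m n a b); rewrite ?lt_mn.
- by case: (later_load_absurd n m b a); rewrite ?lt_nm.
Qed.

Lemma load_event_split m t i a x1 x2 : (m < size tr)%N ->
  List.In (EvLoad t i a) (nth dflt tr m).1 ->
  run_events tr = x1 ++ EvLoad t i a :: x2 ->
  x1 = run_events (take m tr) /\ x2 = run_events (drop m.+1 tr).
Proof.
move=> lt_m Hm; have [evs_m _] := step_load_inv (run_state_step lt_m) Hm.
rewrite (run_events_cut dflt lt_m) evs_m /= => Hsplit.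
have notin_take : ~ List.In (EvLoad t i a) (run_events (take m tr)).
  move=> /(In_run_events dflt) [n]; rewrite size_take lt_m => lt_nm.
  by rewrite nth_take // => /(load_step_uniq (ltn_trans lt_nm lt_m) lt_m)/(_ Hm); lia.
have notin_drop : ~ List.In (EvLoad t i a) (run_events (drop m.+1 tr)).
  move=> /(In_run_events dflt) [n]; rewrite size_drop nth_drop ltn_subRL => lt_n.
  by move=> /(load_step_uniq lt_n lt_m)/(_ Hm); lia.
exact: cat_cons_uniq (esym Hsplit) notin_take notin_drop.
Qed.

Hypothesis final_tr : final zero (run_state (size tr)).

Notation final_state := (run_state (size tr)).

Lemma commit_key_gt_prop m n t j k a k0 : (m <= n < size tr)%N ->
  List.In (EvCommitSt t j k a) (nth dflt tr n).1 ->
  coK (run_state m) (sprop (run_state m) t a) = Some k0 -> (k0 < k)%R.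
Proof.
move=> /andP [le_mn lt_n] Hin Hk0.
have [ea [ed [kp [_ _ Hkp lt_kp _]]]] := step_commit_store_inv (run_state_step lt_n) Hin.
case: (run_state_le le_mn) => _ _ _ _ /(_ t a k0 Hk0) [k' Hk' le_k0].
by rewrite Hkp in Hk'; case: Hk' => <- in le_k0; apply: le_lt_trans lt_kp.
Qed.

Lemma mem_read_blocks_commits k n t i a j kk :
  load_from_mem zero (run_state k) t i a (run_state k.+1) -> (k <= n < size tr)%N ->
  List.In (EvCommitSt t j kk a) (nth dflt tr n).1 -> (0 < j < i)%N -> False.
Proof.
move=> [[r [e [Hci Hai]]] [_ HLi]] /[dup] kn_bound /andP [le_kn lt_n] Hin lt_ji.
have [ea [ed [_ [Hcj Haj _ _ Hcoj]]]] := step_commit_store_inv (run_state_step lt_n) Hin.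
have [k0 Hk0] := (run_state_keyed k).1 t a.
have lt_k0 := commit_key_gt_prop kn_bound Hin Hk0.
have le_kF := run_state_le (ltnW (leq_ltn_trans le_kn lt_n)).
have le_nF := run_state_le (ltnW lt_n).
have le_SnF : state_le (run_state n.+1) final_state by apply: run_state_le.
have le_SkF : state_le (run_state k.+1) final_state.
  by apply: run_state_le; apply: leq_ltn_trans le_kn lt_n.
have store_j : is_store final_state t j by exists ea, ed; apply: icmd_le_Some le_nF Hcj.
have load_i : is_load final_state t i by exists r, e; apply: icmd_le_Some le_kF Hci.
have addr_j : addr zero final_state t j (Some a).
  exists (CStore ea ed), ea; split; first exact: icmd_le_Some Hcj.
  by split; last apply: exprval_le_icmd Hcj Haj.
have addr_i : addr zero final_state t i (Some a).
  exists (CLoad r e), e; split; first exact: icmd_le_Some Hci.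
  by split; last apply: exprval_le_icmd Hci Hai.
have [_ _ store_before_load] := final_tr.
have [k1 [k2 []]] := store_before_load t j i a lt_ji store_j load_i addr_j addr_i.
have HLfin : sL final_state t i = Some (sprop (run_state k) t a).
  by case: le_SkF => _ Lmono _ _ _; apply: Lmono; rewrite HLi /= /upd2 !eqxx.
have Hk0fin : coK final_state (sprop (run_state k) t a) = Some k0.
  by case: le_kF => _ _ _ comono _; apply: coK_le comono Hk0.
have Hcofin : sco final_state t j = Some kk.
  by case: le_SnF => _ _ _ comono _; apply: comono.
rewrite Hcofin /coL HLfin /= Hk0fin => -[<-] [<-] le_kk0.
by have := lt_le_trans lt_k0 le_kk0; rewrite ltxx.
Qed.

Lemma early_read_commit_later m t i a : (m < size tr)%N ->
  List.In (EvLoad t i a) (nth dflt tr m).1 ->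
  early_read zero (run_state m) t i a (run_state m.+1) ->
  exists j kk n, [/\ (0 < j < i)%N, (m < n < size tr)%N &
    List.In (EvCommitSt t j kk a) (nth dflt tr n).1].
Proof.
move=> lt_m Hm [_ [_ [j [[lt_ji [c [ea0 [Hc [Hea0 Hae]]]] [ea [ed [v [Hst _]]]] HnC _] _]]]].
move: Hc Hea0 Hae; rewrite Hst => -[<-] [<-] {c ea0} Hae.
have committed : sC final_state t j.
  case: final_tr => all_committed _ _; apply: all_committed.
  exact: icmd_bounds (icmd_le_Some (run_state_le (ltnW lt_m)) Hst).
have [p Cp p_min] := ex_minnP (ex_intro (fun p => sC (run_state p) t j) _ committed).
have lt_mp : (m < p)%N.
  rewrite ltnNge; apply/negP => le_pm.
  by case: (run_state_le le_pm) => _ _ /(_ t j Cp); rewrite (negbTE HnC).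
case: p lt_mp Cp p_min => // n; rewrite ltnS => le_mn Cn n_min.
have lt_n : (n < size tr)%N := n_min _ committed.
have HnCn : ~~ sC (run_state n) t j.
  by apply/negP => /n_min; rewrite ltnn.
have le_mn_st := run_state_le le_mn.
have [a' [kk [Ha' Hin]]] :=
  step_commits_store (run_state_step lt_n) HnCn Cn (icmd_le_Some le_mn_st Hst).
have [<-] := exprval_uniq Ha' (exprval_le_icmd le_mn_st Hst Hae).
have lt_mn : (m < n)%N.
  rewrite ltn_neqAle le_mn andbT; apply/eqP => Emn; subst n.
  have [evs_m _] := step_load_inv (run_state_step lt_m) Hm.
  by rewrite evs_m in Hin; case: Hin.
by exists j, kk, n; rewrite lt_mn lt_n.
Qed.

Lemma reads_from_mem_events t i t' i' :
  reads_from_mem zero P tr t i t' i' ->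
  exists a s1 s2 s3,
    [/\ run_events tr = s1 ++ EvProp t t' i' a :: s2 ++ EvLoad t i a :: s3,
        no_prop_to t a s2 &
        forall e, List.In e s3 -> forall j k, (0 < j <= i - 1)%N -> e <> EvCommitSt t j k a].
Proof.
rewrite /reads_from_mem => -[k [a /= [s' [Hk [lt_k [Hload Hsrc]]]]]].
have evs_k : (nth dflt tr k).1 = [:: EvLoad t i a] by rewrite Hk.
have Hs' : s' = run_state k.+1 by rewrite run_state_succ // Hk.
move: Hsrc; rewrite run_state_sprop => /foldl_prop_update_SStore [s1 [s2 [Hpre Hs2]]].
exists a, s1, s2, (run_events (drop k.+1 tr)); split=> //.
  by rewrite (run_events_cut dflt lt_k) evs_k Hpre -catA.
move=> e /(In_run_events dflt) [n]; rewrite size_drop nth_drop ltn_subRL => lt_n Hin.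
move=> j kk lt_ji Ee; subst e; rewrite Hs' in Hload.
by apply: mem_read_blocks_commits Hload _ Hin _; [rewrite lt_n andbT | ]; lia.
Qed.

Lemma events_reads_from_mem t i t' i' a s1 s2 s3 :
  run_events tr = s1 ++ EvProp t t' i' a :: s2 ++ EvLoad t i a :: s3 ->
  no_prop_to t a s2 ->
  (forall e, List.In e s3 -> forall j k, (0 < j <= i - 1)%N -> e <> EvCommitSt t j k a) ->
  reads_from_mem zero P tr t i t' i'.
Proof.
rewrite -cat_cons catA => Hevs Hs2 Hs3.
have /(In_run_events dflt) [m lt_m Hm] : List.In (EvLoad t i a) (run_events tr).
  by rewrite Hevs; apply/List.in_or_app; right; left.
have [Hpre Hpost] := load_event_split lt_m Hm Hevs.
have Hsrc : sprop (run_state m) t a = SStore D t' i'.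
  by rewrite run_state_sprop -Hpre foldl_prop_update_last.
have [evs_m [Hload|Hearly]] := step_load_inv (run_state_step lt_m) Hm.
  exists m, a => /=; exists (run_state m.+1); split=> //.
  by rewrite -evs_m run_state_succ //; case: nth.
have [j [kk [n [lt_ji /andP [lt_mn lt_n] Hin]]]] := early_read_commit_later lt_m Hm Hearly.
have : List.In (EvCommitSt t j kk a) s3.
  rewrite Hpost; apply: (In_run_events_nth (d := dflt) (m := n - m.+1)).
    by rewrite size_drop; lia.
  by rewrite nth_drop subnKC.
move=> /Hs3/(_ j kk) absurd; exfalso; apply: absurd => //; lia.
Qed.

End Runs.

Theorem lemma5 (D : finType) (zero : D) (Reg : finType) (P : program D Reg)
    (tr : seq (seq (event D Reg) * state D Reg)) :
  power_run zero P tr ->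
  forall t i t' i' : nat,
    reads_from_mem zero P tr t i t' i' <->
    exists (a : D) (s1 s2 s3 : seq (event D Reg)),
      [/\ run_events tr = s1 ++ EvProp t t' i' a :: s2 ++ EvLoad t i a :: s3,
          (forall e, List.In e s2 -> forall u v, e <> EvProp t u v a) &
          (forall e, List.In e s3 -> forall (j : nat) (k : rat),
              (0 < j <= i - 1)%N -> e <> EvCommitSt t j k a)].
Proof.
move=> [run_tr final_last] t i t' i'.
have final_tr : final zero (run_state tr (size tr)) by rewrite /run_state take_size.
split; first exact: reads_from_mem_events.
by move=> [a [s1 [s2 [s3 [Hevs Hs2 Hs3]]]]]; apply: events_reads_from_mem Hevs Hs2 Hs3.
Qed.
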